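(* In the social learning model with Gaussian signals, for every $\varepsilon>0$ there exists $k>0$ such that for all $t\ge1$, $$\mathbb{P}_+\big(a_t=-1\,\big|\,a_\tau=+1\text{ for all }\tau<t\big)>\frac{k}{t^{1+\varepsilon}}.$$
   Context: Social learning model. A state $\theta\in\{-1,+1\}$ is drawn with $\mathbb{P}(\theta=+1)=\mathbb{P}(\theta=-1)=1/2$. Agents $t=1,2,\dots$ receive private signals $s_t\in\mathbb{R}$ that are i.i.d. conditionally on $\theta$, with CDF $F_+$ if $\theta=+1$ and $F_-$ if $\theta=-1$; $F_+$ and $F_-$ are mutually absolutely continuous. Let $L_t=\log\frac{\mathbb{P}(\theta=+1\mid s_t)}{\mathbb{P}(\theta=-1\mid s_t)}$ be the private log-likelihood ratio, and let $G_+$, $G_-$ denote the CDFs of $L_t$ conditional on $\theta=+1$, $\theta=-1$ respectively. Signals are assumed unbounded: for every $M\in\mathbb{R}$, $\mathbb{P}(L_t>M)>0$ and $\mathbb{P}(L_t<-M)>0$. Agent $t$ observes $a_1,\dots,a_{t-1}$ and her own signal and chooses $a_t\in\{-1,+1\}$ (utility $1$ if $a_t=\theta$, else $0$). The public belief is $\mu_t=\mathbb{P}(\theta=+1\mid a_1,\dots,a_{t-1})$ and $\ell_t=\log\frac{\mu_t}{1-\mu_t}$ (so $\ell_1=0$). In equilibrium $a_t=+1$ iff $\ell_t+L_t>0$, and otherwise $a_t=-1$. Consequently $\ell_{t+1}=\ell_t+D_+(\ell_t)$ if $a_t=+1$ and $\ell_{t+1}=\ell_t+D_-(\ell_t)$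 if $a_t=-1$, where $D_+(x)=\log\frac{1-G_+(-x)}{1-G_-(-x)}$ and $D_-(x)=\log\frac{G_+(-x)}{G_-(-x)}$. We write $\mathbb{P}_+(\cdot)=\mathbb{P}(\cdot\mid\theta=+1)$ and $\mathbb{E}_+$ for the corresponding expectation. Gaussian signals: $F_+$ is the normal distribution with mean $+1$ and variance $\sigma^2$, and $F_-$ is the normal distribution with mean $-1$ and variance $\sigma^2$, for some $\sigma>0$. *)

From Stdlib Require Import Reals Lra.
Open Scope R_scope.

Definition std_normal_density (x : R) : R := exp (- (x * x) / 2) / sqrt (2 * PI).

(* Phi is the standard normal CDF: its derivative is the standard normal
   density everywhere and it tends to 0 at -infinity (this determines Phi). *)
Definition is_std_normal_cdf (Phi : R -> R) : Prop :=
  (forall x, derivable_pt_lim Phi x (std_normal_density x)) /\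
  (forall e, 0 < e -> exists M, forall x, x < M -> Rabs (Phi x) < e).

(* Signal CDFs: N(+1, sigma^2) under theta=+1 and N(-1, sigma^2) under theta=-1. *)
Definition F_plus (Phi : R -> R) (sigma s : R) : R := Phi ((s - 1) / sigma).
Definition F_minus (Phi : R -> R) (sigma s : R) : R := Phi ((s + 1) / sigma).

(* Private log-likelihood ratio of signal s (uniform prior):
   L(s) = log (f_+(s)/f_-(s)) = 2 s / sigma^2, strictly increasing,
   so  L(s) <= x  iff  s <= sigma^2 x / 2. *)
Definition LLR (sigma s : R) : R := 2 * s / (sigma * sigma).

(* CDFs of L_t conditional on theta = +1 / -1. *)
Definition G_plus (Phi : R -> R) (sigma x : R) : R :=
  F_plus Phi sigma (sigma * sigma * x / 2).
Definition G_minus (Phi : R -> R) (sigma x : R) : R :=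
  F_minus Phi sigma (sigma * sigma * x / 2).

Definition D_plus (Phi : R -> R) (sigma x : R) : R :=
  ln ((1 - G_plus Phi sigma (- x)) / (1 - G_minus Phi sigma (- x))).
Definition D_minus (Phi : R -> R) (sigma x : R) : R :=
  ln (G_plus Phi sigma (- x) / G_minus Phi sigma (- x)).

(* Public log-likelihood ratio of agent t = n+1 on the event that
   a_1 = ... = a_n = +1 (deterministic on that event): ell_1 = 0,
   ell_{t+1} = ell_t + D_+(ell_t). *)
Fixpoint ell_plus (Phi : R -> R) (sigma : R) (n : nat) : R :=
  match n with
  | O => 0
  | S m => ell_plus Phi sigma m + D_plus Phi sigma (ell_plus Phi sigma m)
  end.

(* P_+(a_t = +1 | a_1 = ... = a_{t-1} = +1) = P_+(ell_t + L_t > 0)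
   = 1 - G_+(-ell_t), and P_+(a_t = -1 | same) = G_+(-ell_t);
   here t = n+1. *)
Definition prob_plus_step (Phi : R -> R) (sigma : R) (n : nat) : R :=
  1 - G_plus Phi sigma (- ell_plus Phi sigma n).
Definition prob_minus_step (Phi : R -> R) (sigma : R) (n : nat) : R :=
  G_plus Phi sigma (- ell_plus Phi sigma n).

(* P_+(a_1 = ... = a_n = +1), by independence of signals given theta. *)
Fixpoint prob_all_plus (Phi : R -> R) (sigma : R) (n : nat) : R :=
  match n with
  | O => 1
  | S m => prob_all_plus Phi sigma m * prob_plus_step Phi sigma m
  end.

(* P_+(a_1 = ... = a_n = +1, a_{n+1} = -1). *)
Definition prob_plus_then_minus (Phi : R -> R) (sigma : R) (n : nat) : R :=
  prob_all_plus Phi sigma n * prob_minus_step Phi sigma n.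

(* P_+(a_t = -1 | a_tau = +1 for all tau < t), with t = n+1
   (ratio definition of conditional probability). *)
Definition cond_prob_first_minus (Phi : R -> R) (sigma : R) (n : nat) : R :=
  prob_plus_then_minus Phi sigma n / prob_all_plus Phi sigma n.

From Stdlib Require Import Reals Lra Lia Classical.
From Coquelicot Require Import Coquelicot.
Open Scope R_scope.

(* On the event that agents 1, ..., t-1 all played +1, agent t plays -1 with
   probability Phi(-z_t), where z_t = sigma ell_t / 2 + 1 / sigma.  Each further
   +1 raises z by (sigma/2) D_+(ell_t) <= (sigma/2) exp(-(z_t - 2/sigma)^2 / 2),
   so the potential V(z) = exp((z+1)^2 / (2(1+eps))) increases by a bounded
   amount per step and V(z_t) <= A t.  The Gaussian lower bound
   Phi(-z) >= phi(z+1) = 1 / (sqrt(2 pi) V(z)^(1+eps)) then gives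
   Phi(-z_t) >= c / t^(1+eps). *)

Local Notation phi := std_normal_density.

Lemma exp_le x y : x <= y -> exp x <= exp y.
Proof.
  intros [Hlt | ->]; [left; exact (exp_increasing _ _ Hlt) | right; reflexivity].
Qed.

Lemma exp_neg_sq_le_1 x : exp (- (x * x) / 2) <= 1.
Proof. rewrite <- exp_0. apply exp_le. nra. Qed.

Lemma exp_sub_le_mul x y : exp x - exp y <= exp x * (x - y).
Proof.
  replace (exp y) with (exp x * exp (y - x)) by (rewrite <- exp_plus; f_equal; ring).
  pose proof (exp_ineq1_le (y - x)). pose proof (exp_pos x). nra.
Qed.

Lemma ln_le_sub_1 x : 0 < x -> ln x <= x - 1.
Proof. intros Hx. pose proof (exp_ineq1_le (ln x)) as H. rewrite exp_ln in H; lra. Qed.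

Lemma ln_ratio_nonneg p q : p <= q -> p < 1 -> 0 <= ln ((1 - p) / (1 - q)).
Proof.
  intros Hpq Hp.
  destruct (Rlt_or_le q 1) as [Hq | Hq].
  - rewrite <- ln_1. apply ln_le; [lra |].
    apply Rmult_le_reg_r with (1 - q); [lra |].
    unfold Rdiv. rewrite Rmult_assoc, Rinv_l; lra.
  - (* [ln] is [0] on nonpositive arguments, and [/ 0 = 0] *)
    assert (Hratio : (1 - p) / (1 - q) <= 0).
    { destruct (Req_dec q 1) as [-> | Hq1].
      - unfold Rdiv. rewrite Rminus_diag, Rinv_0. lra.
      - assert (/ (1 - q) < 0) by (apply Rinv_lt_0_compat; lra).
        unfold Rdiv. nra. }
    unfold ln. destruct (Rlt_dec 0 ((1 - p) / (1 - q))) as [Hpos | _]; [exfalso; lra | lra].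
Qed.

Lemma ln_ratio_le p q : 0 <= p < 1 -> 0 <= q <= / 2 -> ln ((1 - p) / (1 - q)) <= 2 * q.
Proof.
  intros Hp Hq.
  set (r := (1 - p) / (1 - q)).
  assert (Hr : r * (1 - q) = 1 - p) by (unfold r; field; lra).
  assert (Hr0 : 0 < r) by (unfold r; apply Rdiv_lt_0_compat; lra).
  apply Rle_trans with (r - 1); [exact (ln_le_sub_1 r Hr0) |].
  apply Rmult_le_reg_r with (1 - q); [lra |].
  replace ((r - 1) * (1 - q)) with (q - p) by (rewrite Rmult_minus_distr_r, Hr; ring).
  nra.
Qed.

Lemma quadratic_bounded_above p q r : p < 0 ->
  exists M, forall u, p * u * u + q * u + r <= M.
Proof.
  intros Hp. exists (r - q * q / (4 * p)). intros u.
  assert (E : p * u * u + q * u + r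
              = r - q * q / (4 * p) + (2 * p * u + q) * (2 * p * u + q) * / (4 * p))
    by (field; lra).
  assert (Hinv : / (4 * p) < 0) by (apply Rinv_lt_0_compat; lra).
  pose proof (Rle_0_sqr (2 * p * u + q)) as Hsq. unfold Rsqr in Hsq.
  rewrite E. set (X := (2 * p * u + q) * (2 * p * u + q)) in *. nra.
Qed.

Lemma sqrt_2PI_gt_2 : 2 < sqrt (2 * PI).
Proof.
  pose proof PI2_3_2. apply Rle_lt_trans with (sqrt (2 * 2)).
  - rewrite sqrt_square; lra.
  - apply sqrt_lt_1; lra.
Qed.

Lemma std_normal_density_pos x : 0 < phi x.
Proof.
  apply Rdiv_lt_0_compat; [apply exp_pos | pose proof sqrt_2PI_gt_2; lra].
Qed.

Lemma std_normal_density_lt x : phi x < exp (- (x * x) / 2) / 2.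
Proof.
  unfold std_normal_density, Rdiv. pose proof sqrt_2PI_gt_2.
  apply Rmult_lt_compat_l; [apply exp_pos | apply Rinv_lt_contravar; lra].
Qed.

Lemma std_normal_density_lt_half x : phi x < / 2.
Proof. pose proof (std_normal_density_lt x). pose proof (exp_neg_sq_le_1 x). lra. Qed.

Lemma std_normal_density_le_sq x y : x * x <= y * y -> phi y <= phi x.
Proof.
  intros Hxy. unfold std_normal_density, Rdiv.
  apply Rmult_le_compat_r.
  - left. apply Rinv_0_lt_compat. pose proof sqrt_2PI_gt_2. lra.
  - apply exp_le. lra.
Qed.

Definition potential (eps z : R) : R := exp ((z + 1) * (z + 1) / (2 * (1 + eps))).

Lemma potential_pos eps z : 0 < potential eps z.
Proof. apply exp_pos. Qed.

Lemma potential_le eps x y : 0 < eps -> 0 <= x <= y -> potential eps x <= potential eps y.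
Proof.
  intros Heps Hxy. apply exp_le. unfold Rdiv.
  apply Rmult_le_compat_r; [left; apply Rinv_0_lt_compat; lra | nra].
Qed.

Lemma std_normal_density_succ_eq eps z : 0 < eps ->
  phi (z + 1) = / (sqrt (2 * PI) * Rpower (potential eps z) (1 + eps)).
Proof.
  intros Heps. pose proof sqrt_2PI_gt_2.
  unfold std_normal_density, Rpower, potential. rewrite ln_exp.
  replace ((1 + eps) * ((z + 1) * (z + 1) / (2 * (1 + eps)))) with (- (- ((z + 1) * (z + 1)) / 2))
    by (field; apply Rgt_not_eq; lra).
  rewrite exp_Ropp. field. split; [apply Rgt_not_eq, exp_pos | lra].
Qed.

(* The slack [eps] is what makes the increment bounded: the exponent below is a
   quadratic in [z] with leading coefficient [1 / (2 (1 + eps)) - 1 / 2 < 0]. *)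
Lemma potential_increment eps c beta : 0 < eps -> 0 < c ->
  exists K, 0 < K /\ forall z d, 0 <= z ->
    0 <= d <= c * exp (- ((z - beta) * (z - beta)) / 2) ->
    potential eps (z + d) <= potential eps z + K.
Proof.
  intros Heps Hc.
  set (k := / (2 * (1 + eps))).
  assert (Hk : 0 < k < / 2).
  { split; [apply Rinv_0_lt_compat; lra | apply Rinv_lt_contravar; nra]. }
  destruct (quadratic_bounded_above (k - / 2) (2 * k * (1 + c) + beta + 2)
              (k * (1 + c) * (1 + c) - beta * beta / 2 + 2 + c)) as [M HM]; [lra |].
  exists (c * exp M). split; [apply Rmult_lt_0_compat; [lra | apply exp_pos] |].
  intros z d Hz [Hd0 Hd].
  set (E := exp (- ((z - beta) * (z - beta)) / 2)) in Hd.
  assert (HE : 0 < E <= 1).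
  { split; [apply exp_pos | apply exp_neg_sq_le_1]. }
  set (A := (z + d + 1) * (z + d + 1) * k).
  set (B := (z + 1) * (z + 1) * k).
  change (exp A <= exp B + c * exp M).
  pose proof (exp_sub_le_mul A B) as Hconvex.
  assert (HAB : A - B <= c * E * (2 * z + 2 + c)).
  { assert (Hdc : d <= c) by nra.
    assert (A - B = d * (2 * z + 2 + d) * k) by (unfold A, B; ring).
    assert (0 <= d * (2 * z + 2 + d)) by nra.
    assert (d * (2 * z + 2 + d) * k <= d * (2 * z + 2 + d)) by nra.
    assert (d * (2 * z + 2 + d) <= d * (2 * z + 2 + c)) by nra.
    assert (d * (2 * z + 2 + c) <= c * E * (2 * z + 2 + c)) by nra.
    lra. }
  assert (HA : exp A <= exp ((z + 1 + c) * (z + 1 + c) * k)).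
  { apply exp_le. unfold A. apply Rmult_le_compat_r; [lra |].
    assert (d <= c) by nra. nra. }
  assert (Hlin : 2 * z + 2 + c <= exp (2 * z + 2 + c)).
  { pose proof (exp_ineq1_le (2 * z + 2 + c)). lra. }
  assert (Hexp : exp ((z + 1 + c) * (z + 1 + c) * k) * (E * exp (2 * z + 2 + c)) <= exp M).
  { unfold E. rewrite <- !exp_plus. apply exp_le.
    eapply Rle_trans; [right | apply (HM z)]. field. }
  assert (HAB' : A - B <= c * E * exp (2 * z + 2 + c)).
  { eapply Rle_trans; [exact HAB | apply Rmult_le_compat_l; nra]. }
  assert (exp A * (A - B) <= c * exp M).
  { pose proof (exp_pos A). pose proof (exp_pos (2 * z + 2 + c)).
    apply Rle_trans with (exp A * (c * E * exp (2 * z + 2 + c)));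
      [apply Rmult_le_compat_l; lra |].
    apply Rle_trans with (exp ((z + 1 + c) * (z + 1 + c) * k) * (c * E * exp (2 * z + 2 + c)));
      [apply Rmult_le_compat_r; [nra | exact HA] |].
    nra. }
  lra.
Qed.

Lemma linear_bound_of_bounded_increments (V : R -> R) (z : nat -> R) (T K : R) :
  (forall x y, 0 <= x <= y -> V x <= V y) -> (forall x, 0 < V x) -> 0 <= K ->
  (forall n, 0 <= z n <= z (S n)) ->
  (forall n, T <= z n -> V (z (S n)) <= V (z n) + K) ->
  exists A, 0 < A /\ forall n, V (z n) <= A * INR (S n).
Proof.
  intros HV Vpos HK Hz Hstep.
  assert (Hmono : forall m n, (m <= n)%nat -> z m <= z n).
  { induction 1 as [| n _ IH]; [lra | specialize (Hz n); lra]. }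
  assert (HSn : forall n, 1 <= INR (S n)).
  { intros n. rewrite S_INR. pose proof (pos_INR n). lra. }
  destruct (classic (exists N, T <= z N)) as [[N HN] | Hnever].
  - exists (V (z N) + K). pose proof (Vpos (z N)). split; [lra |].
    assert (Hafter : forall j, V (z (N + j)%nat) <= V (z N) + K * INR j).
    { induction j as [| j IH].
      - rewrite Nat.add_0_r. simpl. lra.
      - rewrite Nat.add_succ_r, S_INR.
        assert (HT : T <= z (N + j)%nat) by (pose proof (Hmono N (N + j)%nat ltac:(lia)); lra).
        specialize (Hstep _ HT). lra. }
    intros n. specialize (HSn n).
    destruct (Nat.le_gt_cases n N) as [Hle | Hgt].
    + assert (V (z n) <= V (z N)) by (apply HV; split; [apply Hz | apply Hmono; lia]).
      nra.
    + pose proof (Hafter (n - N)%nat) as Hn.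
      replace (N + (n - N))%nat with n in Hn by lia.
      assert (INR (n - N) <= INR (S n)) by (apply le_INR; lia).
      nra.
  - exists (V T). split; [apply Vpos |].
    intros n. specialize (HSn n). pose proof (Vpos T).
    assert (z n < T) by (apply Rnot_le_lt; intros HTn; apply Hnever; exists n; exact HTn).
    assert (V (z n) <= V T) by (apply HV; split; [apply Hz | lra]).
    nra.
Qed.

Section StdNormalCdf.

Variable Phi : R -> R.
Hypothesis Phi_deriv : forall x, derivable_pt_lim Phi x (phi x).
Hypothesis Phi_vanishes : forall e, 0 < e -> exists M, forall x, x < M -> Rabs (Phi x) < e.

Lemma Phi_increasing x y : x < y -> Phi x < Phi y.
Proof.
  intros Hxy. destruct (MVT_cor2 Phi phi x y Hxy) as [c [Hc _]].
  - intros c _. apply Phi_deriv.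
  - pose proof (std_normal_density_pos c). nra.
Qed.

Lemma Phi_le x y : x <= y -> Phi x <= Phi y.
Proof. intros [Hlt | ->]; [left; apply Phi_increasing | right]; auto. Qed.

Lemma Phi_pos x : 0 < Phi x.
Proof.
  set (e := Phi x - Phi (x - 1)).
  assert (He : 0 < e) by (unfold e; pose proof (Phi_increasing (x - 1) x); lra).
  destruct (Phi_vanishes e He) as [M HM].
  set (y := Rmin M (x - 1) - 1).
  assert (Hy : y < M /\ y < x - 1) by (unfold y; pose proof (Rmin_l M (x - 1));
                                       pose proof (Rmin_r M (x - 1)); lra).
  pose proof (Rabs_def2 _ _ (HM y (proj1 Hy))).
  pose proof (Phi_increasing y (x - 1) (proj2 Hy)).
  unfold e in *. lra.
Qed.

Lemma Phi_opp_eventually_lt e y : 0 < e -> exists z, y <= z /\ Phi (- z) < e.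
Proof.
  intros He. destruct (Phi_vanishes e He) as [M HM].
  exists (Rmax y (- M) + 1). split; [pose proof (Rmax_l y (- M)); lra |].
  assert (Hz : - (Rmax y (- M) + 1) < M) by (pose proof (Rmax_r y (- M)); lra).
  pose proof (Rabs_def2 _ _ (HM _ Hz)). lra.
Qed.

(* Mills' inequality: [phi z / z - Phi (- z)] has derivative [- phi z / z^2 <= 0]
   and its limit at infinity is [0]. *)
Lemma Phi_opp_le_density_div y : 0 < y -> Phi (- y) <= phi y / y.
Proof.
  intros Hy.
  set (g z := phi z / z - Phi (- z)).
  assert (Hg : forall z, y <= z -> g z <= g y).
  { intros z [Hlt | ->]; [| lra].
    destruct (MVT_cor2 g (fun c => - phi c / (c * c)) y z Hlt) as [c [Hc Hcy]].
    - intros c Hcy. apply is_derive_Reals. unfold g, std_normal_density.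
      auto_derive.
      + repeat split; [lra | exists (phi (- c)); apply is_derive_Reals, Phi_deriv].
      + replace (Derive (fun x => Phi x) (- c)) with (phi (- c))
          by (symmetry; apply is_derive_unique, is_derive_Reals, Phi_deriv).
        unfold std_normal_density. pose proof sqrt_2PI_gt_2.
        replace (- c * - c) with (c * c) by ring. unfold Rdiv. field. lra.
    - assert (0 < phi c / (c * c))
        by (apply Rdiv_lt_0_compat; [apply std_normal_density_pos | nra]).
      unfold Rdiv in *. nra. }
  apply Rle_plus_epsilon. intros e He.
  destruct (Phi_opp_eventually_lt e y He) as [z [Hyz Hz]].
  specialize (Hg z Hyz). unfold g in Hg.
  assert (0 < phi z / z) by (apply Rdiv_lt_0_compat; [apply std_normal_density_pos | lra]).
  lra.
Qed.

Lemma Phi_lt_1 u : u <= 0 -> Phi u < 1.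
Proof.
  intros Hu.
  destruct (MVT_cor2 Phi phi (- 1) 0 ltac:(lra)) as [c [Hc _]]; [intros; apply Phi_deriv |].
  pose proof (Phi_le u 0 Hu).
  pose proof (Phi_opp_le_density_div 1 ltac:(lra)).
  pose proof (std_normal_density_lt_half c). pose proof (std_normal_density_lt_half 1).
  replace (phi 1 / 1) with (phi 1) in * by field.
  replace (0 - -1) with 1 in Hc by ring.
  replace (- (1)) with (-1) in * by ring.
  lra.
Qed.

Lemma density_le_Phi_opp s : 0 <= s -> phi (s + 1) <= Phi (- s).
Proof.
  intros Hs.
  destruct (MVT_cor2 Phi phi (- s - 1) (- s) ltac:(lra)) as [c [Hc Hcs]];
    [intros; apply Phi_deriv |].
  pose proof (std_normal_density_le_sq c (s + 1) ltac:(nra)).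
  pose proof (Phi_pos (- s - 1)).
  lra.
Qed.

Lemma Phi_opp_le_exp w : 1 <= w -> 2 * Phi (- w) <= exp (- (w * w) / 2).
Proof.
  intros Hw.
  pose proof (Phi_opp_le_density_div w ltac:(lra)).
  pose proof (std_normal_density_lt w). pose proof (std_normal_density_pos w).
  assert (phi w / w <= phi w).
  { apply Rmult_le_reg_r with w; [lra |].
    unfold Rdiv. rewrite Rmult_assoc, Rinv_l; nra. }
  lra.
Qed.

Variable sigma : R.
Hypothesis sigma_pos : 0 < sigma.

(* [cutoff sigma ell] is the standardized signal threshold: agent [t] plays [-1]
   iff [(s_t - 1) / sigma <= - cutoff sigma ell_t]. *)
Definition cutoff (x : R) : R := sigma / 2 * x + 1 / sigma.

Lemma cutoff_ge x : 0 <= x -> 1 / sigma <= cutoff x.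
Proof. intros Hx. unfold cutoff. assert (0 <= sigma / 2 * x) by (apply Rmult_le_pos; lra). lra. Qed.

Lemma inv_sigma_pos : 0 < 1 / sigma.
Proof. apply Rdiv_lt_0_compat; lra. Qed.

Lemma G_plus_opp x : G_plus Phi sigma (- x) = Phi (- cutoff x).
Proof. unfold G_plus, F_plus, cutoff. f_equal. field. lra. Qed.

Lemma G_minus_opp x : G_minus Phi sigma (- x) = Phi (- (cutoff x - 2 / sigma)).
Proof. unfold G_minus, F_minus, cutoff. f_equal. field. lra. Qed.

Lemma D_plus_nonneg x : 0 <= x -> 0 <= D_plus Phi sigma x.
Proof.
  intros Hx. unfold D_plus. rewrite G_plus_opp, G_minus_opp.
  pose proof (cutoff_ge x Hx). pose proof inv_sigma_pos.
  apply ln_ratio_nonneg.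
  - apply Phi_le. unfold Rdiv in *. lra.
  - apply Phi_lt_1. lra.
Qed.

Lemma D_plus_le x : 0 <= x -> 1 <= cutoff x - 2 / sigma ->
  D_plus Phi sigma x <= exp (- ((cutoff x - 2 / sigma) * (cutoff x - 2 / sigma)) / 2).
Proof.
  intros Hx Hw. unfold D_plus. rewrite G_plus_opp, G_minus_opp.
  pose proof (cutoff_ge x Hx). pose proof inv_sigma_pos.
  pose proof (Phi_opp_le_exp _ Hw) as Htail.
  pose proof (exp_neg_sq_le_1 (cutoff x - 2 / sigma)).
  eapply Rle_trans; [apply ln_ratio_le | exact Htail].
  - split; [left; apply Phi_pos | apply Phi_lt_1; lra].
  - split; [left; apply Phi_pos | lra].
Qed.

Local Notation ell := (ell_plus Phi sigma).

Lemma ell_plus_nonneg_le_succ n : 0 <= ell n <= ell (S n).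
Proof.
  induction n as [| n IH]; simpl in *.
  - pose proof (D_plus_nonneg 0 (Rle_refl 0)). lra.
  - pose proof (D_plus_nonneg (ell n + D_plus Phi sigma (ell n)) ltac:(lra)). lra.
Qed.

Lemma cutoff_ell_plus_nonneg n : 0 <= cutoff (ell n).
Proof.
  pose proof (cutoff_ge _ (proj1 (ell_plus_nonneg_le_succ n))). pose proof inv_sigma_pos. lra.
Qed.

Lemma cutoff_ell_plus_succ n :
  cutoff (ell (S n)) = cutoff (ell n) + sigma / 2 * D_plus Phi sigma (ell n).
Proof. unfold cutoff. simpl. ring. Qed.

Lemma prob_all_plus_pos n : 0 < prob_all_plus Phi sigma n.
Proof.
  induction n as [| n IH]; simpl; [lra |].
  assert (0 < prob_plus_step Phi sigma n).
  { unfold prob_plus_step. rewrite G_plus_opp.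
    pose proof (cutoff_ell_plus_nonneg n).
    pose proof (Phi_lt_1 (- cutoff (ell n)) ltac:(lra)). lra. }
  nra.
Qed.

Lemma cond_prob_first_minus_eq n : cond_prob_first_minus Phi sigma n = Phi (- cutoff (ell n)).
Proof.
  unfold cond_prob_first_minus, prob_plus_then_minus, prob_minus_step.
  rewrite G_plus_opp. pose proof (prob_all_plus_pos n). field. lra.
Qed.

Lemma potential_cutoff_linear eps : 0 < eps ->
  exists A, 0 < A /\ forall n, potential eps (cutoff (ell n)) <= A * INR (S n).
Proof.
  intros Heps.
  destruct (potential_increment eps (sigma / 2) (2 / sigma) Heps ltac:(lra)) as [K [HK Hinc]].
  assert (Hz : forall n, 0 <= cutoff (ell n) <= cutoff (ell (S n))).
  { intros n. split; [apply cutoff_ell_plus_nonneg |].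
    rewrite cutoff_ell_plus_succ. pose proof (D_plus_nonneg _ (proj1 (ell_plus_nonneg_le_succ n))).
    nra. }
  apply (linear_bound_of_bounded_increments (potential eps) (fun n => cutoff (ell n))
           (1 + 2 / sigma) K).
  - intros x y Hxy. exact (potential_le eps x y Heps Hxy).
  - apply potential_pos.
  - lra.
  - exact Hz.
  - intros n Hn. rewrite cutoff_ell_plus_succ.
    pose proof (proj1 (ell_plus_nonneg_le_succ n)) as Hell.
    apply Hinc; [apply Hz |]. split.
    + pose proof (D_plus_nonneg _ Hell). nra.
    + apply Rmult_le_compat_l; [lra | apply D_plus_le; lra].
Qed.

Lemma cond_prob_first_minus_ge eps n : 0 < eps ->
  / (sqrt (2 * PI) * Rpower (potential eps (cutoff (ell n))) (1 + eps))
  <= cond_prob_first_minus Phi sigma n.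
Proof.
  intros Heps. rewrite cond_prob_first_minus_eq, <- (std_normal_density_succ_eq eps _ Heps).
  apply density_le_Phi_opp, cutoff_ell_plus_nonneg.
Qed.

End StdNormalCdf.

Theorem lemma7 (sigma : R) (Phi : R -> R) :
  0 < sigma -> is_std_normal_cdf Phi ->
  forall eps : R, 0 < eps ->
  exists k : R, 0 < k /\
    forall t : nat, (1 <= t)%nat ->
      cond_prob_first_minus Phi sigma (t - 1) > k / Rpower (INR t) (1 + eps).
Proof.
  intros Hsigma [Phi_deriv Phi_vanishes] eps Heps.
  destruct (potential_cutoff_linear Phi Phi_deriv Phi_vanishes sigma Hsigma eps Heps)
    as [A [HA HVA]].
  set (C := sqrt (2 * PI) * Rpower A (1 + eps)).
  assert (HC : 0 < C) by (pose proof sqrt_2PI_gt_2; apply Rmult_lt_0_compat; [lra | apply exp_pos]).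
  exists (/ (2 * C)). split; [apply Rinv_0_lt_compat; lra |].
  intros [| n] Ht; [lia |]. replace (S n - 1)%nat with n by lia.
  set (z := cutoff sigma (ell_plus Phi sigma n)).
  set (Rt := Rpower (INR (S n)) (1 + eps)).
  assert (HRt : 0 < Rt) by apply exp_pos.
  assert (Hpow : Rpower (potential eps z) (1 + eps) <= Rpower A (1 + eps) * Rt).
  { unfold Rt. rewrite Rpower_mult_distr; [| lra | apply lt_0_INR; lia].
    apply Rle_Rpower_l; [lra |]. split; [apply potential_pos | apply HVA]. }
  pose proof (cond_prob_first_minus_ge Phi Phi_deriv Phi_vanishes sigma Hsigma eps n Heps) as Hlow.
  fold z in Hlow.
  assert (/ (C * Rt) <= / (sqrt (2 * PI) * Rpower (potential eps z) (1 + eps))).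
  { pose proof sqrt_2PI_gt_2. apply Rinv_le_contravar.
    - apply Rmult_lt_0_compat; [lra | apply exp_pos].
    - unfold C. rewrite Rmult_assoc. apply Rmult_le_compat_l; lra. }
  assert (/ (2 * C) / Rt < / (C * Rt)).
  { replace (/ (2 * C) / Rt) with (/ 2 * / (C * Rt)) by (field; lra).
    assert (0 < / (C * Rt)) by (apply Rinv_0_lt_compat; nra). lra. }
  lra.
Qed.
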